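(* Let $\ell\in\mathbb{N}$, $r\in\mathbb{N}_0$, and let $J_0,\dots,J_\ell,I_1,\dots,I_r\subseteq\mathbb{R}$ satisfy conditions (i)–(iv) of the definition of a connected CL-graph, with $G$ the intersection graph on $J_0,\dots,J_\ell,I_1,\dots,I_r$. For $0\le j\le\ell-1$ put $F_j=\{J_j,J_{j+1}\}\cup\{I_i: 1\le i\le r,\ j\in I_i\}$. Then the maximal cliques of $G$ are exactly $F_0,F_1,\dots,F_{\ell-1}$; in particular $c(G)=\ell$, and $\ell(G)=\ell$ (with $J_0,J_1,\dots,J_\ell$ forming an induced path of length $\ell$).
   Context: $c(G)$ is the number of maximal cliques of $G$; $\ell(G)$ is the length (number of edges) of a longest induced path of the connected graph $G$. Vertices of the intersection graph are identified with the sets defining them. Intersection graph: given a finite list of sets $S_1,\dots,S_m$, the intersection graph on this list has one vertex for each $S_i$ (distinct indices give distinct vertices), and the vertices corresponding to $S_i$ and $S_j$ ($i\neq j$) are adjacent iff $S_i\cap S_j\neq\emptyset$. Conditions defining a connected CL-graph, with $\mathbb{N}=\{1,2,\dots\}$, $\mathbb{N}_0=\{0,1,2,\dots\}$: (i) $J_0=\{0\}$ and $J_j=[j-1,j]$ for $1\le j\le \ell$; (ii) for each $1\le i\le r$ there is some $t\in\mathbb{N}$ with $I_i=[a_1,b_1]\cup[a_2,b_2]\cup\cdots\cup[a_t,b_t]$, where $a_1,\dots,a_t\in\mathbb{N}_0$, $b_1,\dots,b_t\in\mathbb{R}$, $a_1<b_1<a_2<b_2<\cdots<a_t<b_t<\ell$,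 and $a_{k+1}-b_k>2$ for all $1\le k\le t-1$; (iii) if $\{I_{i_1},\dots,I_{i_t}\}\subseteq\{I_1,\dots,I_r\}$ satisfies $I_{i_p}\cap I_{i_q}\neq\emptyset$ for all $1\le p<q\le t$, then $\bigcap_{k=1}^t I_{i_k}\neq\emptyset$; (iv) if $I_p\cap I_q\neq\emptyset$ and $j\in I_p\setminus I_q$ for some $j\in\mathbb{N}_0$, then ($j+1\notin I_p$ implies $j+1\notin I_q$) and ($j-1\notin I_p$ implies $j-1\notin I_q$). *)

From HB Require Import structures.
From mathcomp Require Import all_boot all_order all_algebra.
From mathcomp Require Import boolp classical_sets.
From mathcomp Require Import Rstruct.
From Stdlib Require Rdefinitions.
Notation R := Rdefinitions.R.
Set Implicit Arguments. Unset Strict Implicit. Unset Printing Implicit Defensive.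
Import Order.TTheory GRing.Theory Num.Theory.
Local Open Scope ring_scope.

(* Intersection graph on a finite family of sets S : V -> set R
   (vertices are the indices, so distinct indices give distinct vertices). *)
Definition iadj (V : finType) (S : V -> set R) (u v : V) : Prop :=
  u <> v /\ exists x : R, S u x /\ S v x.

Definition is_clique (V : finType) (S : V -> set R) (K : {set V}) : Prop :=
  forall u v, u \in K -> v \in K -> u <> v -> iadj S u v.

Definition is_max_clique (V : finType) (S : V -> set R) (K : {set V}) : Prop :=
  is_clique S K /\
  forall K' : {set V}, is_clique S K' -> K \subset K' -> K' = K.

Definition num_max_cliques (V : finType) (S : V -> set R) : nat :=
  #|[set K : {set V} | `[< is_max_clique S K >]]|.

(* an induced path is a duplicate-free vertex sequence v_0..v_k with
   v_i ~ v_j iff |i - j| = 1; its length is k = size p - 1 *)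
Definition induced_path (V : finType) (S : V -> set R) (p : seq V) : Prop :=
  uniq p /\ (0 < size p)%N /\
  forall (x0 : V) (i j : nat), (i < size p)%N -> (j < size p)%N ->
    (iadj S (nth x0 p i) (nth x0 p j) <-> (i.+1 = j \/ j.+1 = i)).

Definition longest_induced_path_length (V : finType) (S : V -> set R) (n : nat)
  : Prop :=
  (exists p, induced_path S p /\ size p = n.+1) /\
  (forall p, induced_path S p -> (size p <= n.+1)%N).

Definition CL_J (l : nat) (j : 'I_l.+1) : set R :=
  fun x => if (j == 0 :> nat) then x = 0
           else (j%:R - 1 <= x) /\ (x <= j%:R).

Definition CL_cond_ii (l : nat) (I : set R) : Prop :=
  exists (t : nat) (a b : nat -> R),
    (0 < t)%N /\
    (forall k, (k < t)%N -> exists n : nat, a k = n%:R) /\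
    (forall k, (k < t)%N -> a k < b k) /\
    (forall k, (k.+1 < t)%N -> b k < a k.+1) /\
    b t.-1 < l%:R /\
    (forall k, (k.+1 < t)%N -> a k.+1 - b k > 2) /\
    (forall x, I x <-> exists2 k, (k < t)%N & (a k <= x /\ x <= b k)).

Definition CL_cond_iii (r : nat) (I : 'I_r -> set R) : Prop :=
  forall A : {set 'I_r},
    (forall p q, p \in A -> q \in A -> exists x, I p x /\ I q x) ->
    exists x, forall k, k \in A -> I k x.

Definition CL_cond_iv (r : nat) (I : 'I_r -> set R) : Prop :=
  forall (p q : 'I_r) (j : nat),
    (exists x, I p x /\ I q x) ->
    I p j%:R -> ~ I q j%:R ->
    (~ I p (j%:R + 1) -> ~ I q (j%:R + 1)) /\
    (~ I p (j%:R - 1) -> ~ I q (j%:R - 1)).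

(* vertex type: inl j is J_j (0 <= j <= l), inr i is I_{i+1} *)
Definition CL_V (l r : nat) : finType := ('I_l.+1 + 'I_r)%type.

Definition CL_sets (l r : nat) (I : 'I_r -> set R) : CL_V l r -> set R :=
  fun v => match v with inl j => CL_J j | inr i => I i end.

Definition CL_F (l r : nat) (I : 'I_r -> set R) (j : nat) : {set CL_V l r} :=
  [set (inl (inord j) : CL_V l r); inl (inord j.+1)] :|:
  [set (inr i : CL_V l r) | i in [set i : 'I_r | `[< I i j%:R >]]].

(* Each I_i is a union of intervals with integer left ends separated by gaps longer
   than 2. Hence an I_i meeting J_m contains m-1 or m, and one meeting both J_m and
   J_(m+1) contains m. So every clique lies in some F_j: this is immediate if it
   contains two consecutive J's; if it contains a single J_m, condition (iv) prevents
   its I's from splitting between m-1 and m; if it contains no J, the Helly property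
   (iii) yields a common point x of its I's, which then all contain floor x. The F_j
   are cliques (they share the point j) and pairwise incomparable, so they are exactly
   the maximal cliques. Finally, distinct edges of an induced path cannot lie in a
   common clique, so an induced path has at most l edges, and J_0, ..., J_l has l. *)

From HB Require Import structures.
From mathcomp Require Import all_boot all_order all_algebra.
From mathcomp Require Import boolp classical_sets.
From mathcomp Require Import Rstruct.
From mathcomp Require Import lra zify.
Set Implicit Arguments. Unset Strict Implicit. Unset Printing Implicit Defensive.
Import Order.TTheory GRing.Theory Num.Theory.
Local Open Scope ring_scope.

Lemma clique_of_common_point (V : finType) (S : V -> set R) (K : {set V}) x :
  (forall v, v \in K -> S v x) -> is_clique S K.
Proof. by move=> KS u v uK vK uv; split => //; exists x; split; apply: KS. Qed.

Section CliqueCover.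
Variables (V : finType) (S : V -> set R) (n : nat) (F : nat -> {set V}).
Hypothesis F_clique : forall j, (j < n)%N -> is_clique S (F j).
Hypothesis clique_cover :
  forall K, is_clique S K -> exists2 j, (j < n)%N & K \subset F j.

(* Two distinct edges of an induced path never lie in a common clique, so choosing
   for each edge a cover clique containing it is injective. *)
Lemma induced_path_size_cover p : induced_path S p -> (size p <= n.+1)%N.
Proof.
move=> [p_uniq [p_gt0 p_adj]].
have [x0 _] : exists x0 : V, true by case: p p_gt0 {p_uniq p_adj} => // x; exists x.
set k := (size p).-1; have size_p : size p = k.+1 by rewrite prednK.
pose edge i : {set V} := [set nth x0 p i; nth x0 p i.+1].
have edge_clique (i : 'I_k) : is_clique S (edge i).
  have ik := ltn_ord i.
  move=> u v; rewrite !inE => /orP[]/eqP-> /orP[]/eqP-> // _;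
    apply/(p_adj x0); rewrite ?size_p; first [by left | by right | lia].
have edge_cover (i : 'I_k) : exists j, (j < n)%N && (edge i \subset F j).
  by have [j jn sub] := clique_cover (edge_clique i); exists j; rewrite jn sub.
have f_lt (i : 'I_k) : (xchoose (edge_cover i) < n)%N.
  by case/andP: (xchooseP (edge_cover i)).
pose f i : 'I_n := Ordinal (f_lt i).
have f_neq (i i' : 'I_k) : (i < i')%N -> f i <> f i'.
  move=> ii' /(congr1 val) /= f_eq.
  have /andP[jn sub] := xchooseP (edge_cover i).
  have /andP[_] := xchooseP (edge_cover i'); rewrite -f_eq => sub'.
  set j := xchoose (edge_cover i) in jn sub sub'.
  have u : nth x0 p i \in F j by apply: (fintype.subsetP sub); rewrite !inE eqxx.
  have v : nth x0 p i'.+1 \in F j by apply: (fintype.subsetP sub'); rewrite !inE eqxx orbT.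
  have uv : nth x0 p i <> nth x0 p i'.+1.
    by move/eqP; rewrite nth_uniq ?size_p //; have := ltn_ord i'; lia.
  by move/(p_adj x0): (F_clique jn u v uv); rewrite size_p; have := ltn_ord i'; lia.
have f_inj : injective f.
  move=> i i' fii'; apply: val_inj.
  by case: (ltngtP i i') => // h; [case: (f_neq _ _ h) | case: (f_neq _ _ h)].
by have := leq_card f f_inj; rewrite !card_ord size_p.
Qed.

Hypothesis F_subset_inj :
  forall j j', (j < n)%N -> (j' < n)%N -> F j \subset F j' -> j = j'.

Lemma max_clique_cover K : is_max_clique S K <-> exists2 j, (j < n)%N & K = F j.
Proof.
split=> [[K_clique K_max] | [j jn ->]].
  have [j jn KF] := clique_cover K_clique.
  by exists j => //; apply/esym/K_max => //; apply: F_clique.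
split=> [|K' K'_clique FK']; first exact: F_clique.
have [j' j'n K'F] := clique_cover K'_clique.
have e := F_subset_inj jn j'n (fintype.subset_trans FK' K'F); subst j'.
by apply/eqP; rewrite finset.eqEsubset K'F FK'.
Qed.

Lemma num_max_cliques_cover : num_max_cliques S = n.
Proof.
rewrite /num_max_cliques.
have -> : [set K | `[< is_max_clique S K >]] = [set F j | j : 'I_n].
  apply/setP => K; rewrite inE; apply/asboolP/imsetP.
    by move/max_clique_cover => [j jn ->]; exists (Ordinal jn).
  by move=> [j _ ->]; apply/max_clique_cover; exists (nat_of_ord j).
rewrite card_imset ?card_ord // => j j' e.
by apply/val_inj/F_subset_inj; rewrite ?ltn_ord ?e.
Qed.

End CliqueCover.

Lemma gap_chain_gt2 (t : nat) (a b : nat -> R) :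
  (forall k, (k < t)%N -> a k < b k) ->
  (forall k, (k.+1 < t)%N -> a k.+1 - b k > 2) ->
  forall k k', (k < k')%N -> (k' < t)%N -> a k' - b k > 2.
Proof.
move=> ab gap k k' kk'.
have -> : k' = (k + (k' - k).-1).+1 by lia.
elim: (k' - k).-1 => [|d IH] dt; first by rewrite addn0; apply: gap; lia.
have := IH ltac:(lia); have := ab (k + d).+1 ltac:(lia).
rewrite addnS; have := gap (k + d).+1 ltac:(lia); lra.
Qed.

Section IntervalUnion.
Variables (l : nat) (J : set R).
Hypothesis HJ : CL_cond_ii l J.

Lemma cond_ii_nonempty : exists x, J x.
Proof.
case: HJ => t [a [b [t0 [_ [ab [_ [_ [_ memJ]]]]]]]].
by exists (a 0%N); apply/memJ; exists 0%N => //; have := ab 0%N t0; lra.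
Qed.

Lemma cond_ii_range x : J x -> 0 <= x < l%:R.
Proof.
case: HJ => t [a [b [t0 [a_nat [ab [_ [bl [gap memJ]]]]]]]].
move/memJ=> [k kt [akx xbk]]; apply/andP; split.
  by case: (a_nat k kt) => m e; apply: le_trans akx; rewrite e.
apply: le_lt_trans xbk (le_lt_trans _ bl).
have [-> //|kt'] : k = t.-1 \/ (k < t.-1)%N by lia.
have := gap_chain_gt2 ab gap kt' ltac:(lia).
have := ab k kt; have := ab t.-1 ltac:(lia); lra.
Qed.

Lemma cond_ii_truncn x : J x -> J (Num.truncn x)%:R /\ (Num.truncn x < l)%N.
Proof.
move=> Jx; have /andP[x0 xl] := cond_ii_range Jx.
split; last by rewrite truncn_lt_nat.
case: HJ => t [a [b [_ [a_nat [_ [_ [_ [_ memJ]]]]]]]].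
move/memJ: Jx => [k kt [akx xbk]]; apply/memJ; exists k => //.
have [m e] := a_nat k kt; have /andP[tx _] := truncn_itv x0.
split; last lra.
by rewrite e ler_nat truncn_ge_nat //; lra.
Qed.

(* The gaps longer than 2 keep [x, y] inside a single component. *)
Lemma cond_ii_nat_between (j : nat) x y : J x -> J y ->
  j%:R - 1 <= x <= j%:R -> j%:R <= y <= j%:R + 1 -> J j%:R.
Proof.
case: HJ => t [a [b [_ [_ [ab [_ [_ [gap memJ]]]]]]]].
move=> /memJ[k kt [akx xbk]] /memJ[k' kt' [ay yb]] /andP[x1 x2] /andP[y1 y2].
apply/memJ; case: (ltngtP k k') => kk'.
- by have := gap_chain_gt2 ab gap kk' kt'; lra.
- by have := gap_chain_gt2 ab gap kk' kt; have := ab k' kt'; lra.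
- by subst k'; exists k => //; lra.
Qed.

Lemma cond_ii_nat_near (m : nat) x : J x -> m%:R - 1 <= x <= m%:R ->
  (0 < m)%N /\ J m.-1%:R \/ J m%:R.
Proof.
move=> Jx /andP[x1 x2].
have [xm|xm] := eqVneq x m%:R; first by right; rewrite -xm.
left; have xltm : x < m%:R by rewrite lt_neqAle xm x2.
case: HJ => t [a [b [_ [a_nat [_ [_ [_ [_ memJ]]]]]]]].
move/memJ: (Jx) => [k kt [akx xbk]]; have [i e] := a_nat k kt.
have im : (i < m)%N by rewrite -(ltr_nat R) -e; lra.
split; first lia.
apply/memJ; exists k => //; split; first by rewrite e ler_nat; lia.
have -> : m.-1%:R = m%:R - 1 :> R.
  have m1 : m = m.-1.+1 by lia.
  by rewrite {2}m1 -natr1 addrK.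
lra.
Qed.

End IntervalUnion.

Section CLGraph.
Variables (l r : nat) (I : 'I_r -> set R).

Local Notation V := (CL_V l r).
Local Notation S := (@CL_sets l r I).
Local Notation F := (@CL_F l r I).

Lemma CL_J_cases (m : 'I_l.+1) x : CL_J m x ->
  m = 0 :> nat /\ x = 0 \/ (0 < m)%N /\ m%:R - 1 <= x <= m%:R.
Proof.
rewrite /CL_J; case: eqP => [-> | /eqP m0] Jx; first by left.
by right; rewrite lt0n m0; split => //; apply/andP.
Qed.

Lemma CL_J_nat (m : 'I_l.+1) (j : nat) : m = j :> nat \/ m = j.+1 :> nat -> CL_J m j%:R.
Proof.
rewrite /CL_J => -[-> | ->] /=; first by case: eqP => [-> | _] //; split; lra.
by rewrite -natr1; lra.
Qed.

Lemma CL_J_meet (m m' : 'I_l.+1) x : CL_J m x -> CL_J m' x -> (m <= m'.+1)%N.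
Proof.
move=> /CL_J_cases[[-> //] | [_ /andP[x1 x2]]] /CL_J_cases[[e x0] | [_ /andP[y1 y2]]].
  by rewrite e -(ler_nat R); lra.
by rewrite -(ler_nat R) -natr1; lra.
Qed.

Lemma CL_J_iadj (a b : 'I_l.+1) :
  iadj S (inl a) (inl b) <-> a.+1 = b :> nat \/ b.+1 = a :> nat.
Proof.
split=> [[ab [x [Jax Jbx]]] | ab_consec].
  have := CL_J_meet Jax Jbx; have := CL_J_meet Jbx Jax.
  have : a <> b :> nat by move=> /val_inj e; apply: ab; rewrite e.
  lia.
split; first by move=> -[e]; case: ab_consec; rewrite e; lia.
by exists (minn a b)%:R; split; apply: CL_J_nat; lia.
Qed.

Lemma CL_J_induced_path : induced_path S [seq (inl j : V) | j <- enum 'I_l.+1].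
Proof.
split; first by rewrite map_inj_uniq ?enum_uniq //; apply: inl_inj.
rewrite size_map size_enum_ord; split=> // x0 i j il jl.
rewrite !(nth_map ord0) -?enumT ?size_enum_ord //.
by apply: iff_trans (CL_J_iadj _ _) _; rewrite !nth_enum_ord.
Qed.

Lemma clique_J_consecutive (K : {set V}) (m m' : 'I_l.+1) : is_clique S K ->
  inl m \in K -> inl m' \in K -> m <> m' -> m.+1 = m' :> nat \/ m'.+1 = m :> nat.
Proof. by move=> HK mK m'K mm'; apply/CL_J_iadj/HK => // -[]. Qed.

Lemma mem_CL_F (j : nat) (v : V) : (j < l)%N -> (v \in F j) =
  match v with inl m => (m == j :> nat) || (m == j.+1 :> nat)
             | inr i => `[< I i j%:R >] end.
Proof.
move=> jl; rewrite /CL_F !inE; case: v => [m|i].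
  have -> : (inl m \in [set (inr i : V) | i in [set i | `[< I i j%:R >]]]) = false.
    by apply/negbTE/imsetP => -[].
  by rewrite orbF !(inj_eq (@inl_inj _ _)) -!val_eqE /= !inordK //; lia.
apply/idP/idP => [/orP[/orP[] // | /imsetP[i']] | Ii].
  by rewrite inE => Ii' [->].
by apply/orP; right; apply/imsetP; exists i => //; rewrite inE.
Qed.

Lemma CL_F_clique (j : nat) : (j < l)%N -> is_clique S (F j).
Proof.
move=> jl; apply: (@clique_of_common_point _ _ _ j%:R) => -[m|i]; rewrite mem_CL_F //=.
  by move=> /orP[] /eqP e; apply: CL_J_nat; [left | right].
by move/asboolP.
Qed.

Lemma CL_F_subset_inj (j j' : nat) : (j < l)%N -> (j' < l)%N -> F j \subset F j' -> j = j'.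
Proof.
move=> jl j'l /fintype.subsetP FF'.
have := FF' (inl (inord j)); have := FF' (inl (inord j.+1)).
by rewrite !mem_CL_F //= !inordK ?eqxx ?orbT; lia.
Qed.

Hypothesis Hii : forall i, CL_cond_ii l (I i).
Hypothesis Hiii : CL_cond_iii I.
Hypothesis Hiv : CL_cond_iv I.

Lemma CL_I_meet_J i (m : 'I_l.+1) x : I i x -> CL_J m x ->
  (0 < m)%N /\ I i m.-1%:R \/ I i m%:R.
Proof.
move=> Ix /CL_J_cases[[m0 x0] | [_ xm]]; last exact: cond_ii_nat_near xm.
by right; rewrite m0; rewrite x0 in Ix.
Qed.

Lemma CL_I_meet_J_succ i (m m' : 'I_l.+1) x y : m' = m.+1 :> nat ->
  I i x -> CL_J m x -> I i y -> CL_J m' y -> I i m%:R.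
Proof.
move=> e Ix /CL_J_cases[[m0 x0] _ _ | [_ xm] Iy /CL_J_cases[[m'0 _] | [_]]].
- by rewrite m0; rewrite x0 in Ix.
- by rewrite e in m'0.
rewrite e -natr1 => ym'; apply: (cond_ii_nat_between (Hii i) Ix Iy xm).
by move: ym'; rewrite addrK.
Qed.

Lemma clique_J_succ_subset_CL_F (K : {set V}) (m m' : 'I_l.+1) : is_clique S K ->
  inl m \in K -> inl m' \in K -> m' = m.+1 :> nat -> K \subset F m.
Proof.
move=> HK mK m'K e; have ml : (m < l)%N by have := ltn_ord m'; lia.
apply/fintype.subsetP => -[m''|i] vK; rewrite mem_CL_F //.
  have [-> | ne] := eqVneq m'' m; first by rewrite eqxx.
  have [-> | ne'] := eqVneq m'' m'; first by rewrite e eqxx orbT.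
  have := clique_J_consecutive HK vK mK (elimN eqP ne).
  by have := clique_J_consecutive HK vK m'K (elimN eqP ne'); lia.
have [_ [x [Ix Jmx]]] : iadj S (inr i) (inl m) by apply: HK.
have [_ [y [Iy Jm'y]]] : iadj S (inr i) (inl m') by apply: HK.
by apply/asboolP; apply: CL_I_meet_J_succ e Ix Jmx Iy Jm'y.
Qed.

(* Each [I_i] of the clique contains [m-1] or [m]; if one misses [m-1], condition (iv)
   forces all of them to contain [m]. *)
Lemma clique_J_subset_CL_F (K : {set V}) (m : 'I_l.+1) : (0 < l)%N -> is_clique S K ->
  inl m \in K -> (forall m', inl m' \in K -> m' = m) ->
  exists2 j, (j < l)%N & K \subset F j.
Proof.
move=> l_gt0 HK mK onlyJm.
have near i : inr i \in K -> (0 < m)%N /\ I i m.-1%:R \/ I i m%:R.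
  move=> iK; have [_ [x [Ix Jx]]] : iadj S (inr i) (inl m) by apply: HK.
  exact: CL_I_meet_J Ix Jx.
have [m0 | m_gt0] := posnP m.
  exists 0%N => //; apply/fintype.subsetP => -[m'|i] vK; rewrite mem_CL_F //.
    by rewrite (onlyJm _ vK) m0.
  by apply/asboolP; case: (near _ vK) => [[] | ]; rewrite m0.
have ml : (m.-1 < l)%N by have := ltn_ord m; lia.
case: (pselect (forall i, inr i \in K -> I i m.-1%:R)) => [allI | ].
  exists m.-1 => //; apply/fintype.subsetP => -[m'|i] vK; rewrite mem_CL_F //.
    by rewrite (onlyJm _ vK) prednK // eqxx orbT.
  by apply/asboolP/allI.
move=> /existsNP[p /not_implyP[pK Ip_pred]].
have Ipm : I p m%:R by case: (near _ pK) => [[]|].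
have ml' : (m < l)%N by have /andP[_] := cond_ii_range (Hii p) Ipm; rewrite ltr_nat.
exists (nat_of_ord m) => //.
apply/fintype.subsetP => -[m'|i] vK; rewrite mem_CL_F // ?(onlyJm _ vK) ?eqxx //.
apply/asboolP; case: (near _ vK) => [[_ Ii_pred] | //]; apply: contrapT => Ni.
have [_ [x [Ix Ipx]]] : iadj S (inr i) (inr p) by apply: HK => // -[ip]; rewrite ip in Ii_pred.
have [+ _] := Hiv (ex_intro _ x (conj Ix Ipx)) Ii_pred Ip_pred.
by rewrite natr1 prednK //; apply.
Qed.

(* Without [J]'s the Helly property (iii) gives a common point [x] of the clique,
   and every [I_i] then also contains [floor x]. *)
Lemma clique_noJ_subset_CL_F (K : {set V}) : (0 < l)%N -> is_clique S K ->
  (forall m, inl m \notin K) -> exists2 j, (j < l)%N & K \subset F j.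
Proof.
move=> l_gt0 HK noJ.
have [x Ix] : exists x, forall i, i \in [set i | inr i \in K] -> I i x.
  apply: Hiii => p q; rewrite !inE => pK qK.
  have [<- | pq] := eqVneq p q.
    by have [y Iy] := cond_ii_nonempty (Hii p); exists y.
  have [_ [y Iy]] : iadj S (inr p) (inr q) by apply: HK => // -[] /eqP; rewrite (negbTE pq).
  by exists y.
have Ix' i : inr i \in K -> I i x by move=> iK; apply: Ix; rewrite inE.
case: (pselect (exists p, inr p \in K)) => [[p pK] | noI].
  have [_ jl] := cond_ii_truncn (Hii p) (Ix' _ pK).
  exists (Num.truncn x) => //; apply/fintype.subsetP => -[m|i] vK; rewrite mem_CL_F //.
    by rewrite (negbTE (noJ m)) in vK.
  by apply/asboolP; case: (cond_ii_truncn (Hii i) (Ix' _ vK)).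
exists 0%N => //; apply/fintype.subsetP => -[m|i] vK.
  by rewrite (negbTE (noJ m)) in vK.
by case: noI; exists i.
Qed.

Lemma CL_clique_cover (K : {set V}) : (0 < l)%N -> is_clique S K ->
  exists2 j, (j < l)%N & K \subset F j.
Proof.
move=> l_gt0 HK.
case: (pselect (exists m m' : 'I_l.+1,
    [/\ inl m \in K, inl m' \in K & m' = m.+1 :> nat])) => [[m [m' [mK m'K e]]] | noJS].
  exists (nat_of_ord m); first by have := ltn_ord m'; lia.
  exact: clique_J_succ_subset_CL_F mK m'K e.
case: (pselect (exists m, inl m \in K)) => [[m mK] | noJ]; last first.
  by apply: clique_noJ_subset_CL_F => // m; apply/negP => mK; apply: noJ; exists m.
apply: (clique_J_subset_CL_F l_gt0 HK mK) => m' m'K; apply: contrapT => ne.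
by case: (clique_J_consecutive HK m'K mK ne) => e; apply: noJS;
  [exists m', m | exists m, m'].
Qed.

End CLGraph.

Theorem mainTheorem4 (l r : nat) (I : 'I_r -> set R) :
  (0 < l)%N ->
  (forall i, CL_cond_ii l (I i)) ->
  CL_cond_iii I ->
  CL_cond_iv I ->
  (forall K : {set CL_V l r},
      is_max_clique (@CL_sets l r I) K <-> exists2 j, (j < l)%N & K = @CL_F l r I j) /\
  num_max_cliques (@CL_sets l r I) = l /\
  longest_induced_path_length (@CL_sets l r I) l /\
  induced_path (@CL_sets l r I) [seq (inl j : CL_V l r) | j <- enum 'I_l.+1].
Proof.
move=> l_gt0 Hii Hiii Hiv.
have F_clique := @CL_F_clique l r I.
have cover K := @CL_clique_cover l r I Hii Hiii Hiv K l_gt0.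
have F_inj := @CL_F_subset_inj l r I.
have J_path := CL_J_induced_path l I.
split; first exact: max_clique_cover.
split; first exact: num_max_cliques_cover F_clique cover F_inj.
split=> //; split; last exact: induced_path_size_cover F_clique cover.
by exists [seq (inl j : CL_V l r) | j <- enum 'I_l.+1]; rewrite size_map size_enum_ord.
Qed.
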